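(* Let $E/\mathbb{Q}$ be given by the model $y^2=x^3+Ax+B$ ($A,B\in\mathbb{Z}$) described in the context and $X=\max\{|A|^3,|B|^2\}$. Let $P,Q\in E(\mathbb{Q})$ satisfy $|x(P)|,|x(Q)|\le 2X^{1/6}$ and $x(P)=x_1/s$, $x(Q)=x_2/s$ with $x_1,x_2\in\mathbb{Z}$, $x_1\ne x_2$, and $s$ a positive integer. Then $$h(P+Q)\le 3h(s)+\tfrac12\log X+3.9.$$
   Context: The model is obtained from a global minimal Weierstrass equation of $E$ by the substitution $x\mapsto \frac{1}{36}(x-3b_2)$, $y\mapsto \frac12(\frac{y}{108}-\frac{a_1}{36}(x-3b_2)-a_3)$. $h$ is the absolute logarithmic Weil height (so $h(s)=\log s$) and $h(P)=h(x(P))$. *)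

From HB Require Import structures.
From mathcomp Require Import all_boot all_order all_algebra.
From mathcomp Require Import reals exp.
Set Implicit Arguments. Unset Strict Implicit. Unset Printing Implicit Defensive.
Import Order.TTheory GRing.Theory Num.Theory.
Local Open Scope ring_scope.

(* A (general) Weierstrass model y^2 + a1 xy + a3 y = x^3 + a2 x^2 + a4 x + a6 over Q *)
Record wmodel := WM { a1 : rat; a2 : rat; a3 : rat; a4 : rat; a6 : rat }.

Definition b2 (m : wmodel) : rat := a1 m ^+ 2 + 4 * a2 m.
Definition b4 (m : wmodel) : rat := 2 * a4 m + a1 m * a3 m.
Definition b6 (m : wmodel) : rat := a3 m ^+ 2 + 4 * a6 m.
Definition b8 (m : wmodel) : rat :=
  a1 m ^+ 2 * a6 m + 4 * a2 m * a6 m - a1 m * a3 m * a4 m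
  + a2 m * a3 m ^+ 2 - a4 m ^+ 2.
Definition c4 (m : wmodel) : rat := b2 m ^+ 2 - 24 * b4 m.
Definition c6 (m : wmodel) : rat := - b2 m ^+ 3 + 36 * b2 m * b4 m - 216 * b6 m.
Definition disc (m : wmodel) : rat :=
  - b2 m ^+ 2 * b8 m - 8 * b4 m ^+ 3 - 27 * b6 m ^+ 2 + 9 * b2 m * b4 m * b6 m.

Definition integral_model (m : wmodel) : Prop :=
  [/\ a1 m \is a Num.int, a2 m \is a Num.int, a3 m \is a Num.int,
      a4 m \is a Num.int & a6 m \is a Num.int].

(* The model obtained by the change of variables
   x = u^2 x' + r,  y = u^3 y' + s u^2 x' + t   (u <> 0)  (Silverman, Table 3.1). *)
Definition change (m : wmodel) (u r s t : rat) : wmodel :=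
  WM ((a1 m + 2 * s) / u)
     ((a2 m - s * a1 m + 3 * r - s ^+ 2) / u ^+ 2)
     ((a3 m + r * a1 m + 2 * t) / u ^+ 3)
     ((a4 m - s * a3 m + 2 * r * a2 m - (t + r * s) * a1 m + 3 * r ^+ 2
        - 2 * s * t) / u ^+ 4)
     ((a6 m + r * a4 m + r ^+ 2 * a2 m + r ^+ 3 - t * a3 m - t ^+ 2
        - r * t * a1 m) / u ^+ 6).

Definition global_minimal (m : wmodel) : Prop :=
  [/\ integral_model m, disc m != 0 &
      forall u r s t : rat, u != 0 -> integral_model (change m u r s t) ->
        `|disc m| <= `|disc (change m u r s t)| ].

Inductive point := Inf | Aff of rat & rat.

Definition on_curve (A B : int) (P : point) : Prop :=
  match P with
  | Inf => True
  | Aff x y => y ^+ 2 = x ^+ 3 + A%:~R * x + B%:~R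
  end.

Definition ec_add (A B : int) (P Q : point) : point :=
  match P, Q with
  | Inf, _ => Q
  | _, Inf => P
  | Aff x1 y1, Aff x2 y2 =>
    if x1 == x2 then
      if y1 == - y2 then Inf
      else let l := (3 * x1 ^+ 2 + A%:~R) / (2 * y1) in
           let x3 := l ^+ 2 - x1 - x2 in Aff x3 (l * (x1 - x3) - y1)
    else let l := (y2 - y1) / (x2 - x1) in
         let x3 := l ^+ 2 - x1 - x2 in Aff x3 (l * (x1 - x3) - y1)
  end.

Definition hrat (R : realType) (q : rat) : R :=
  ln (Num.max (`|numq q|%:~R) ((denq q)%:~R)).

Definition hpt (R : realType) (P : point) : R :=
  match P with Inf => 0 | Aff x _ => hrat R x end.

(* Write x(P) = u1/s and x(Q) = u2/s.  The chord formula gives x(P+Q) = N/D with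
   D = s (u1 - u2)^2 and N an integral polynomial in A, B, s, u1, u2 and
   w = s^3 y(P) y(Q).  Since M_i = s^3 y_i^2 = u_i^3 + A u_i s^2 + B s^3 is an
   integer and w^2 = M_1 M_2, w is an integer too.  With T = X^(1/6) we have
   |A| <= T^2, |B| <= T^3 and |u_i| <= 2 s T, hence |M_i| <= 11 (sT)^3,
   |N| <= 44 (sT)^3 and D <= 16 (sT)^3, so h(P+Q) <= log (44 (sT)^3); finally
   log 44 < 3.9. *)

From HB Require Import structures.
From mathcomp Require Import all_boot all_order all_algebra.
From mathcomp Require Import reals sequences exp.
From mathcomp Require Import ring lra.
Set Implicit Arguments. Unset Strict Implicit. Unset Printing Implicit Defensive.
Import Order.TTheory GRing.Theory Num.Theory.
Local Open Scope ring_scope.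

Lemma Qint_sqr (q : rat) : q ^+ 2 \is a Num.int -> q \is a Num.int.
Proof.
move=> q2_int; rewrite Qint_def.
have num_sqr : numq q * numq q = numq (q ^+ 2) * denq q * denq q.
  apply: (@intr_inj rat); rewrite !rmorphM /= numqE (numqK q2_int); ring.
have : (denq q %| numq q * numq q)%Z by rewrite num_sqr dvdz_mull.
rewrite Gauss_dvdzr ?coprimezE 1?coprime_sym ?coprime_num_den // dvdzE => den_dvd.
have := coprime_dvdl den_dvd (coprime_num_den q).
by rewrite /coprime gcdnn => /eqP den1; rewrite -absz_denq den1.
Qed.

Lemma numq_denq_frac_le (n d : int) : 0 < d ->
  `|numq (n%:~R / d%:~R : rat)| <= `|n| /\ denq (n%:~R / d%:~R : rat) <= d.
Proof.
move=> d_gt0; rewrite -[_ / _](fracqE (n, d)) num_fracq den_fracq /= gt_eqF //=.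
rewrite normrM normr_sign mul1r.
split; first by rewrite -abszE lez_nat leq_div.
by rewrite -[d in _ <= d]gtr0_norm // -abszE lez_nat leq_div.
Qed.

Lemma hrat_frac_le (R : realType) (n d : int) (K : R) : 0 < d ->
  `|n|%:~R <= K -> d%:~R <= K -> hrat R (n%:~R / d%:~R) <= ln K.
Proof.
move=> d_gt0 n_le d_le; rewrite /hrat.
set q := (n%:~R / d%:~R : rat); have [num_le den_le] := numq_denq_frac_le n d_gt0.
have max_le : Num.max (`|numq q|%:~R) (denq q)%:~R <= K.
  by rewrite ge_max (le_trans _ n_le) ?(le_trans _ d_le) ?ler_int.
have max_gt0 : (0 : R) < Num.max (`|numq q|%:~R) (denq q)%:~R.
  by rewrite (lt_le_trans ltr01) // le_max; apply/orP; right; rewrite ler1z -gtz0_ge1 denq_gt0.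
by rewrite ler_ln ?posrE // (lt_le_trans max_gt0).
Qed.

(* s^3 f(u/s) for the cubic f = x^3 + a x + b. *)
Definition hcubic {R : pzRingType} (a b s u : R) : R :=
  u ^+ 3 + a * u * s ^+ 2 + b * s ^+ 3.

Definition chord_num {R : pzRingType} (a b s u1 u2 w : R) : R :=
  (u1 * u2 + a * s ^+ 2) * (u1 + u2) + 2 * b * s ^+ 3 - 2 * w.

Lemma rmorph_hcubic (R S : pzRingType) (f : {rmorphism R -> S}) (a b s u : R) :
  f (hcubic a b s u) = hcubic (f a) (f b) (f s) (f u).
Proof. by rewrite /hcubic !(rmorphD, rmorphM, rmorphXn). Qed.

Lemma rmorph_chord_num (R S : pzRingType) (f : {rmorphism R -> S})
    (a b s u1 u2 w : R) :
  f (chord_num a b s u1 u2 w) = chord_num (f a) (f b) (f s) (f u1) (f u2) (f w).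
Proof. by rewrite /chord_num !(rmorphB, rmorphD, rmorphM, rmorphXn, rmorph_nat). Qed.

Lemma chord_x_homog (F : fieldType) (a b s u1 u2 y1 y2 : F) : s != 0 -> u1 != u2 ->
  y1 ^+ 2 * s ^+ 3 = hcubic a b s u1 -> y2 ^+ 2 * s ^+ 3 = hcubic a b s u2 ->
  ((y2 - y1) / (u2 / s - u1 / s)) ^+ 2 - u1 / s - u2 / s
    = chord_num a b s u1 u2 (y1 * y2 * s ^+ 3) / (s * (u1 - u2) ^+ 2).
Proof.
move=> s_neq0 u12 on1 on2.
have s3_neq0 : s ^+ 3 != 0 by rewrite expf_neq0.
have u21_neq0 : u2 - u1 != 0 by rewrite subr_eq0 eq_sym.
have u12_neq0 : u1 - u2 != 0 by rewrite subr_eq0.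
rewrite expr_div_n sqrrB -(mulfK s3_neq0 (y1 ^+ 2)) -(mulfK s3_neq0 (y2 ^+ 2)) on1 on2.
rewrite /hcubic /chord_num; field.
by rewrite s_neq0 u21_neq0 u12_neq0.
Qed.

Lemma on_curve_hcubic (A B u : int) (s : nat) (y : rat) : (0 < s)%N ->
  on_curve A B (Aff (u%:~R / s%:R) y) ->
  y ^+ 2 * s%:R ^+ 3 = hcubic A%:~R B%:~R s%:R u%:~R.
Proof.
move=> s_gt0 /= ->; rewrite /hcubic; field.
by rewrite pnatr_eq0 -lt0n.
Qed.

Lemma hpt_ec_add_homog (R : realType) (A B u1 u2 : int) (s : nat) (y1 y2 : rat) :
  (0 < s)%N -> u1 != u2 ->
  on_curve A B (Aff (u1%:~R / s%:R) y1) -> on_curve A B (Aff (u2%:~R / s%:R) y2) ->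
  exists2 w : int, w ^+ 2 = hcubic A B s%:R u1 * hcubic A B s%:R u2 &
    hpt R (ec_add A B (Aff (u1%:~R / s%:R) y1) (Aff (u2%:~R / s%:R) y2))
      = hrat R ((chord_num A B s%:R u1 u2 w)%:~R / (s%:R * (u1 - u2) ^+ 2)%:~R).
Proof.
move=> s_gt0 u12 /(on_curve_hcubic s_gt0) on1 /(on_curve_hcubic s_gt0) on2.
have s_neq0 : (s%:R : rat) != 0 by rewrite pnatr_eq0 -lt0n.
set w := y1 * y2 * s%:R ^+ 3.
have w2 : w ^+ 2 = (hcubic A B s%:R u1 * hcubic A B s%:R u2)%:~R.
  by rewrite rmorphM /= !rmorph_hcubic /= rmorph_nat -on1 -on2 /w; ring.
have w_int : w \is a Num.int by apply: Qint_sqr; rewrite w2 intr_int.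
exists (numq w); first by apply: (@intr_inj rat); rewrite rmorphXn /= numqK.
have x12 : (u1%:~R / s%:R == u2%:~R / s%:R :> rat) = false.
  by rewrite (inj_eq (mulIf _)) ?invr_eq0 // eqr_int (negbTE u12).
rewrite /ec_add x12 /= (chord_x_homog s_neq0 _ on1 on2) ?eqr_int //.
by rewrite rmorph_chord_num /= numqK // !(rmorphM, rmorphXn, rmorphB, rmorph_nat).
Qed.

Lemma normrM_le (R : numDomainType) (x y c d : R) :
  `|x| <= c -> `|y| <= d -> `|x * y| <= c * d.
Proof. by move=> xc yd; rewrite normrM ler_pM. Qed.

Lemma normrD_le (R : numDomainType) (x y c d : R) :
  `|x| <= c -> `|y| <= d -> `|x + y| <= c + d.
Proof. by move=> xc yd; rewrite (le_trans (ler_normD _ _)) ?lerD. Qed.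

Section ChordBounds.
Variables (R : realDomainType) (a b S T : R).
Hypotheses (S_ge0 : 0 <= S) (T_ge0 : 0 <= T).
Hypotheses (a_le : `|a| <= T ^+ 2) (b_le : `|b| <= T ^+ 3).

Let normS n : `|S ^+ n| <= S ^+ n.
Proof. by rewrite ger0_norm ?exprn_ge0. Qed.

Lemma hcubic_norm_le u : `|u| <= 2 * S * T -> `|hcubic a b S u| <= 11 * (S * T) ^+ 3.
Proof.
move=> u_le; have u3_le : `|u ^+ 3| <= (2 * S * T) ^+ 3.
  by rewrite normrX lerXn2r ?nnegrE // !mulr_ge0.
apply: le_trans (normrD_le (normrD_le u3_le (normrM_le (normrM_le a_le u_le) (normS 2)))
  (normrM_le b_le (normS 3))) _.
by lra.
Qed.

Lemma chord_num_norm_le u1 u2 w :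
  `|u1| <= 2 * S * T -> `|u2| <= 2 * S * T ->
  w ^+ 2 = hcubic a b S u1 * hcubic a b S u2 ->
  `|chord_num a b S u1 u2 w| <= 44 * (S * T) ^+ 3.
Proof.
move=> u1_le u2_le w2.
have K_ge0 : 0 <= 11 * (S * T) ^+ 3 by rewrite mulr_ge0 ?exprn_ge0 ?mulr_ge0.
have w_le : `|w| <= 11 * (S * T) ^+ 3.
  rewrite -(ler_pXn2r (isT : 0 < 2)%N) ?nnegrE // -normrX w2.
  by rewrite expr2 normrM_le ?hcubic_norm_le.
have two_le : `|2 : R| <= 2 by rewrite ger0_norm.
have w2_le : `|- (2 * w)| <= 2 * (11 * (S * T) ^+ 3) by rewrite normrN normrM_le.
have := normrD_le (normrD_le (normrM_le (normrD_le (normrM_le u1_le u2_le)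
  (normrM_le a_le (normS 2))) (normrD_le u1_le u2_le))
  (normrM_le (normrM_le two_le b_le) (normS 3))) w2_le.
move/le_trans; apply; lra.
Qed.

Lemma chord_den_le u1 u2 : `|u1| <= 2 * S * T -> `|u2| <= 2 * S * T ->
  S * (u1 - u2) ^+ 2 <= 16 * S ^+ 3 * T ^+ 2.
Proof.
move=> u1_le u2_le.
have u12_le : `|u1 - u2| <= 4 * S * T by rewrite (le_trans (ler_normB u1 u2)) //; lra.
have -> : 16 * S ^+ 3 * T ^+ 2 = S * (4 * S * T) ^+ 2 by ring.
by rewrite ler_wpM2l // -real_normK ?num_real // lerXn2r ?nnegrE // !mulr_ge0.
Qed.

End ChordBounds.

Lemma hrat_chord_le (R : realType) (A B u1 u2 w : int) (s : nat) (T : R) :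
  (0 < s)%N -> 1 <= T -> u1 != u2 ->
  w ^+ 2 = hcubic A B s%:R u1 * hcubic A B s%:R u2 ->
  `|A%:~R| <= T ^+ 2 -> `|B%:~R| <= T ^+ 3 ->
  `|u1%:~R| <= 2 * s%:R * T -> `|u2%:~R| <= 2 * s%:R * T ->
  hrat R ((chord_num A B s%:R u1 u2 w)%:~R / (s%:R * (u1 - u2) ^+ 2)%:~R)
    <= ln (44 * (s%:R * T) ^+ 3).
Proof.
move=> s_gt0 T_ge1 u12 w2 A_le B_le u1_le u2_le.
have S_ge0 : (0 : R) <= s%:R by [].
have T_ge0 : 0 <= T by apply: le_trans T_ge1.
apply: hrat_frac_le.
- by rewrite mulr_gt0 ?ltr0n // exprn_even_gt0 // subr_eq0.
- rewrite intr_norm rmorph_chord_num /= rmorph_nat.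
  apply: chord_num_norm_le => //.
  have := congr1 (fun z : int => z%:~R : R) w2.
  by rewrite /= rmorphXn rmorphM !rmorph_hcubic /= rmorph_nat.
- rewrite !(rmorphM, rmorphXn, rmorphB, rmorph_nat) /=.
  apply: le_trans (chord_den_le S_ge0 T_ge0 u1_le u2_le) _.
  have := mulr_ge0 (exprn_ge0 3 S_ge0) (exprn_ge0 2 T_ge0).
  rewrite exprMn [T ^+ 3]exprS; nra.
Qed.

Lemma pow1D_le_expR (R : realType) (x : R) (n : nat) : (0 < n)%N -> 0 <= x ->
  (1 + x / n%:R) ^+ n <= expR x.
Proof.
move=> n_gt0 x_ge0; rewrite -[x in expR x](divfK (_ : n%:R != 0)) ?pnatr_eq0 -?lt0n //.
rewrite expRM_natr lerXn2r ?nnegrE ?expR_ge0 ?expR_ge1Dx //.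
by rewrite addr_ge0 ?divr_ge0.
Qed.

Lemma ler_sqr_lower (R : realDomainType) (b c x : R) :
  0 <= c -> c <= x -> b <= c * c -> b <= x ^+ 2.
Proof. by move=> c_ge0 cx /le_trans; apply; rewrite -expr2 lerXn2r ?nnegrE ?(le_trans c_ge0). Qed.

(* 44 <= (1 + 3.9/128)^128, checked by seven squarings with rational lower bounds. *)
Lemma ln44_le (R : realType) : ln (44 : R) <= 39 / 10.
Proof.
rewrite -ler_expR lnK ?posrE //.
have x_ge0 : (0 : R) <= 39 / 10 by lra.
apply: le_trans (pow1D_le_expR (isT : 0 < 2 ^ 7)%N x_ge0).
rewrite !exprM; set a := 1 + _.
apply: (@ler_sqr_lower _ _ (266/39)); [lra| |lra].
apply: (@ler_sqr_lower _ _ (269/103)); [lra| |lra].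
apply: (@ler_sqr_lower _ _ (181/112)); [lra| |lra].
apply: (@ler_sqr_lower _ _ (239/188)); [lra| |lra].
apply: (@ler_sqr_lower _ _ (168/149)); [lra| |lra].
apply: (@ler_sqr_lower _ _ (103/97)); [lra| |lra].
apply: (@ler_sqr_lower _ _ (1319/1280)); [lra| |lra].
rewrite /a; lra.
Qed.

Lemma ln_44_cube_le (R : realType) (S T : R) : 0 < S -> 0 < T ->
  ln (44 * (S * T) ^+ 3) <= 39 / 10 + 3 * ln S + 3 * ln T.
Proof.
move=> S_gt0 T_gt0.
rewrite lnM ?posrE ?exprn_gt0 ?mulr_gt0 // lnXn ?mulr_gt0 // lnM ?posrE //.
have := ln44_le R; lra.
Qed.

Lemma powR_inv_natK (R : realType) (x : R) (n : nat) : (0 < n)%N -> 0 <= x ->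
  (x `^ n%:R^-1) ^+ n = x.
Proof.
move=> n_gt0 x_ge0.
by rewrite -powR_mulrn ?powR_ge0 // -powRrM mulVf ?pnatr_eq0 -?lt0n // powRr1.
Qed.

Theorem lemma3p7 (R : realType) (A B : int) (m : wmodel)
  (hmin : global_minimal m)
  (hA : A%:~R = -27 * c4 m) (hB : B%:~R = -54 * c6 m)
  (x1 x2 : int) (s : nat) (yP yQ : rat) :
  (0 < s)%N -> x1 != x2 ->
  on_curve A B (Aff (x1%:~R / s%:R) yP) ->
  on_curve A B (Aff (x2%:~R / s%:R) yQ) ->
  let X : int := Num.max (`|A| ^+ 3) (`|B| ^+ 2) in
  `|ratr (x1%:~R / s%:R) : R| <= 2 * (X%:~R : R) `^ (6^-1) ->
  `|ratr (x2%:~R / s%:R) : R| <= 2 * (X%:~R : R) `^ (6^-1) ->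
  hpt R (ec_add A B (Aff (x1%:~R / s%:R) yP) (Aff (x2%:~R / s%:R) yQ))
    <= 3 * ln (s%:R : R) + 2^-1 * ln (X%:~R : R) + 39 / 10.
Proof.
move=> s_gt0 x12 onP onQ X leP leQ.
have X_ge0 : 0 <= X by rewrite le_max exprn_ge0.
set T := (X%:~R : R) `^ 6^-1 in leP leQ *.
have le_sT u : `|ratr (u%:~R / s%:R) : R| <= 2 * T -> `|u%:~R : R| <= 2 * s%:R * T.
  rewrite fmorph_div rmorph_int rmorph_nat normf_div normr_nat.
  by rewrite ler_pdivrMr ?ltr0n // mulrAC.
move/le_sT in leP; move/le_sT in leQ.
have X_gt0 : 0 < X.
  rewrite lt_def X_ge0 andbT; apply: contra_neq x12 => X0.
  have T0 : T = 0 by rewrite /T X0 powR0 ?invr_eq0 ?pnatr_eq0.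
  by move: leP leQ; rewrite T0 mulr0 !normr_le0 !intr_eq0 => /eqP-> /eqP->.
have T_ge1 : 1 <= T by rewrite -(powRr0 (X%:~R : R)) ler_powR ?ler1z ?invr_ge0.
have T6 : T ^+ 6 = X%:~R by rewrite powR_inv_natK ?ler0z.
have A_le : `|A%:~R : R| <= T ^+ 2.
  rewrite -(ler_pXn2r (isT : 0 < 3)%N) ?nnegrE ?exprn_ge0 ?powR_ge0 // -exprM T6.
  by rewrite -intr_norm -rmorphXn ler_int le_max lexx.
have B_le : `|B%:~R : R| <= T ^+ 3.
  rewrite -(ler_pXn2r (isT : 0 < 2)%N) ?nnegrE ?exprn_ge0 ?powR_ge0 // -exprM T6.
  by rewrite -intr_norm -rmorphXn ler_int le_max lexx orbT.
have [w w2 ->] := hpt_ec_add_homog R s_gt0 x12 onP onQ.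
apply: le_trans (hrat_chord_le s_gt0 T_ge1 x12 w2 A_le B_le leP leQ) _.
have s_pos : (0 : R) < s%:R by rewrite ltr0n.
apply: le_trans (ln_44_cube_le s_pos (lt_le_trans ltr01 T_ge1)) _.
by rewrite /T ln_powR; lra.
Qed.
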